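(* Let $\xi_1,\xi_2,\dots$ be i.i.d. standard Gaussian random variables. There are constants $c_3,c_4>0$ such that for all integers $N\ge1$ and all $L\ge2N$, $$c_3N\log(L/N)\le-\log\mathbb{E}\,e^{-L\max_{i=1,\dots,N}|\xi_i|}\le c_4N\log(L/N).$$ *)

From HB Require Import structures.
From mathcomp Require Import all_boot all_order all_algebra.
From mathcomp Require Import all_classical all_reals all_analysis.
Set Implicit Arguments. Unset Strict Implicit. Unset Printing Implicit Defensive.
Import Order.TTheory GRing.Theory Num.Theory.
Local Open Scope classical_set_scope.
Local Open Scope ring_scope.

Definition mutually_independent d (T : measurableType d) (R : realType)
  (P : probability T R) (X : nat -> T -> R) : Prop :=
  forall (J : seq nat) (B : nat -> set R), uniq J ->
    (forall i, measurable (B i)) ->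
    P (\bigcap_(i in [set j | j \in J]) (X i @^-1` B i)) =
    (\prod_(i <- J) P (X i @^-1` B i))%E.

Definition std_gaussian d (T : measurableType d) (R : realType)
  (P : probability T R) (X : {RV P >-> R}) : Prop :=
  forall A : set R, measurable A -> distribution P X A = normal_prob 0 1 A.

(* Write M := max_(i < N) |xi_i|.  For every test point t >= 0,
     e^(-L t) P(M <= t) <= E e^(-L M) <= P(M <= t) + e^(-L t),
   and by independence P(M <= t) = q(t)^N where q(t) = P(|xi| <= t) satisfies
   kappa t <= q(t) <= t for small t.  With x := L/N, the test point t = 1/x
   gives E e^(-L M) >= e^(-N) (kappa/x)^N, and t = exp(-(1 + ln x)/2) makes
   both terms of the upper bound at most exp(-N (1 + ln x)/2).  Taking
   logarithms yields both inequalities, since ln x >= ln 2 is bounded below. *)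
From HB Require Import structures.
From mathcomp Require Import all_boot all_order all_algebra.
From mathcomp Require Import all_classical all_reals all_analysis.
From mathcomp Require Import ring lra measurable_realfun normal_distribution random_variable.
Import Order.TTheory GRing.Theory Num.Theory.
Set Implicit Arguments. Unset Strict Implicit. Unset Printing Implicit Defensive.
Local Open Scope classical_set_scope.
Local Open Scope ring_scope.

Section normal_small_ball.
Variable R : realType.
Local Notation mu := (@lebesgue_measure R).

Lemma normal_peak1_le_half : normal_peak (1 : R) <= 2^-1.
Proof.
rewrite /normal_peak lef_pV2 ?posrE ?sqrtr_gt0//; last first.
  by rewrite expr1n mul1r mulrn_wgt0// pi_gt0.
have -> : (2 : R) = Num.sqrt (2 ^+ 2) by rewrite sqrtr_sqr ger0_norm.
rewrite ler_sqrt; last by rewrite expr1n mul1r mulrn_wge0// pi_ge0.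
rewrite ?expr1n ?mul1r mulr2n expr2; have := @pi_ge2 R; lra.
Qed.

Lemma lebesgue_measure_sym_itv (t : R) : 0 <= t -> mu `[-t, t] = (t *+ 2)%:E.
Proof.
move=> t0; rewrite lebesgue_measure_itv/=.
case: ifPn; rewrite lte_fin => h; first by rewrite -EFinD opprK mulr2n.
have -> : t = 0 by move: h; rewrite -leNgt; lra.
by rewrite mul0rn.
Qed.

Lemma normal_prob_sym_itv_le (t : R) : 0 <= t ->
  (normal_prob 0 1 `[(- t)%R, t] <= t%:E)%E.
Proof.
move=> t0; rewrite /normal_prob.
apply: (@le_trans _ _ (\int[mu]_(x in `[(- t)%R, t]) (normal_peak (1 : R))%:E))%E.
  apply: ge0_le_integral => //.
  - by move=> x _; rewrite lee_fin normal_pdf_ge0.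
  - apply/measurable_EFinP; apply: measurable_funTS; exact: measurable_normal_pdf.
  - by move=> x _; rewrite lee_fin normal_pdf_ub// oner_neq0.
rewrite integral_cst//= lebesgue_measure_sym_itv// -EFinM lee_fin.
have := normal_peak1_le_half; have := normal_peak_ge0 (1 : R); nra.
Qed.

(* On [-1/2, 1/2] the standard density is at least normal_peak 1 * e^(-1/8). *)
Definition normal_small_ball_const : R := 2 * normal_peak 1 * expR (- 8^-1).

Lemma normal_small_ball_const_gt0 : 0 < normal_small_ball_const.
Proof. by rewrite !mulr_gt0// ?expR_gt0// normal_peak_gt0// oner_neq0. Qed.

Lemma normal_prob_sym_itv_ge (t : R) : 0 <= t <= 2^-1 ->
  ((normal_small_ball_const * t)%:E <= normal_prob 0 1 `[(- t)%R, t])%E.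
Proof.
move=> /andP[t0 t2]; rewrite /normal_prob.
apply: (@le_trans _ _
  (\int[mu]_(x in `[(- t)%R, t]) (normal_peak (1 : R) * expR (- 8^-1))%:E))%E;
  last first.
  apply: ge0_le_integral => //.
  - by move=> x _; rewrite lee_fin mulr_ge0 ?normal_peak_ge0 ?expR_ge0.
  - apply/measurable_EFinP; apply: measurable_funTS; exact: measurable_normal_pdf.
  move=> x; rewrite /= in_itv/= => /andP[xa xb].
  rewrite lee_fin /normal_pdf (negbTE (oner_neq0 R)) ler_wpM2l ?normal_peak_ge0//.
  rewrite /normal_fun ler_expR subr0 expr1n.
  have : x ^+ 2 <= 4^-1 by rewrite expr2; nra.
  move: (x ^+ 2) => y; lra.
rewrite integral_cst//= lebesgue_measure_sym_itv// -EFinM lee_fin.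
rewrite /normal_small_ball_const; lra.
Qed.

Definition normal_ball_prob (t : R) : R := fine (normal_prob 0 1 `[-t, t]).

Lemma normal_ball_probE t : normal_prob 0 1 `[-t, t] = (normal_ball_prob t)%:E.
Proof. by rewrite fineK// fin_num_measure. Qed.

Lemma normal_ball_prob_ge0 t : 0 <= normal_ball_prob t.
Proof. by rewrite -lee_fin -normal_ball_probE. Qed.

Lemma normal_ball_prob_le t : 0 <= t -> normal_ball_prob t <= t.
Proof. by move=> t0; rewrite -lee_fin -normal_ball_probE normal_prob_sym_itv_le. Qed.

Lemma normal_ball_prob_ge t : 0 <= t <= 2^-1 ->
  normal_small_ball_const * t <= normal_ball_prob t.
Proof. by move=> ht; rewrite -lee_fin -normal_ball_probE normal_prob_sym_itv_ge. Qed.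

End normal_small_ball.
Arguments normal_small_ball_const {R}.
Arguments normal_small_ball_const_gt0 {R}.

Section laplace_transform_bounds.
Context d (T : measurableType d) (R : realType) (P : probability T R).
Variables (M : T -> R) (L : R).
Hypotheses (mM : measurable_fun setT M) (M_ge0 : forall w, 0 <= M w)
  (L_ge0 : 0 <= L).

Local Notation Y := (fun w => expR (- (L * M w))).

Let mY : measurable_fun setT Y.
Proof.
apply: (measurableT_comp (@measurable_expR R)).
by apply: measurable_funN; apply: measurable_funM.
Qed.

Let measurable_sublevel t : measurable [set w | M w <= t].
Proof.
have := mM measurableT (measurable_itv `]-oo, t]).
by rewrite setTI; congr measurable; apply/seteqP; split => w /=; rewrite in_itv.
Qed.

Lemma expectation_expR_ge t :
  ((expR (- (L * t)))%:E * P [set w | (M w <= t)%R] <= 'E_P[Y])%E.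
Proof.
rewrite unlock -integral_cst//.
apply: (@le_trans _ _ (\int[P]_(w in [set w | (M w <= t)%R]) (Y w)%:E))%E.
  apply: ge0_le_integral => //.
  - by move=> w _; rewrite lee_fin expR_ge0.
  - by apply/measurable_EFinP; apply: measurable_funTS.
  - by move=> w /= Mw; rewrite lee_fin ler_expR lerN2 ler_wpM2l.
apply: ge0_subset_integral => //; first exact/measurable_EFinP.
Qed.

Lemma expectation_expR_le t :
  ('E_P[Y] <= P [set w | (M w <= t)%R] + (expR (- (L * t)))%:E)%E.
Proof.
rewrite unlock.
apply: (@le_trans _ _
  (\int[P]_w ((\1_[set w | (M w <= t)%R] w)%:E + (expR (- (L * t)))%:E)))%E.
  apply: ge0_le_integral => //.
  - exact/measurable_EFinP.
  - by apply/measurable_EFinP; apply: measurable_funD.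
  - move=> w _; rewrite -EFinD lee_fin indicE.
    have [Mw|Mw] := leP (M w) t.
      rewrite mem_set// mulr1n ler_wpDr ?expR_ge0//.
      by rewrite expR_le1 oppr_le0 mulr_ge0.
    rewrite memNset /=; last by apply/negP; rewrite -ltNge.
    by rewrite add0r ler_expR lerN2 ler_wpM2l// ltW.
rewrite ge0_integralD//; last exact/measurable_EFinP/measurable_indic/measurable_sublevel.
by rewrite integral_indic// setIT integral_cst//= probability_setT mule1.
Qed.

Lemma expectation_expR_fin_num : ('E_P[Y])%E \is a fin_num.
Proof.
rewrite ge0_fin_numE; last by apply: expectation_ge0 => w; exact: expR_ge0.
apply: le_lt_trans (expectation_expR_le 0) _.
by rewrite -(fineK (fin_num_measure P _ (measurable_sublevel 0))) -EFinD ltry.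
Qed.

End laplace_transform_bounds.

Section max_abs_gaussian.
Context (R : realType) d (T : measurableType d) (P : probability T R).
Variables (xi : nat -> {RV P >-> R}) (N : nat).

Definition max_abs (w : T) : R := \big[Num.max/0]_(i < N) `|xi i w|.

Lemma max_abs_ge0 w : 0 <= max_abs w.
Proof. by apply: bigmax_ge_id. Qed.

Lemma measurable_max_abs : measurable_fun setT max_abs.
Proof.
rewrite /max_abs; elim: (index_enum _) => [|j s IH].
  by under eq_fun do rewrite big_nil; exact: measurable_cst.
under eq_fun do rewrite big_cons.
apply: measurable_maxr => //.
exact: measurableT_comp (@normr_measurable R setT) (measurable_funPT (xi j)).
Qed.

Lemma max_abs_le_bigcap t : 0 <= t ->
  [set w | max_abs w <= t] =
  \bigcap_(i in [set j | j \in iota 0 N]) (xi i @^-1` `[-t, t]).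
Proof.
move=> t0; apply/seteqP; split => w /=.
  move=> /bigmax_leP[_ h] i /=; rewrite mem_iota add0n => /andP[_ iN].
  by have := h (Ordinal iN) isT; rewrite /= in_itv/= ler_norml.
move=> h; apply/bigmax_leP; split => // i _.
have := h i; rewrite /= mem_iota add0n ltn_ord => /(_ isT).
by rewrite /= in_itv/= ler_norml.
Qed.

Hypothesis indep : mutually_independent P (fun i => (xi i : T -> R)).
Hypothesis gauss : forall i, std_gaussian (xi i).

Lemma prob_max_abs_le t : 0 <= t ->
  P [set w | max_abs w <= t] = (normal_ball_prob t ^+ N)%:E.
Proof.
move=> t0; rewrite max_abs_le_bigcap// indep ?iota_uniq//.
under eq_bigr => i _ do
  rewrite [P _](gauss i (measurable_itv `[-t, t])) normal_ball_probE.
by rewrite prodEFin -[in iota 0 N](subn0 N) prodr_const_nat subn0.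
Qed.

Variable L : R.
Hypotheses (N_ge1 : (1 <= N)%N) (L_ge : 2 * N%:R <= L).

Local Notation E := (fine 'E_P[fun w => expR (- (L * max_abs w))])%E.

Let n_gt0 : 0 < N%:R :> R. Proof. by rewrite ltr0n. Qed.
Let L_ge0 : 0 <= L. Proof. by apply: le_trans L_ge; rewrite mulr_ge0. Qed.
Let x_ge2 : 2 <= L / N%:R. Proof. by rewrite ler_pdivlMr. Qed.
Let L_eq : L = N%:R * (L / N%:R).
Proof. by rewrite mulrC divfK// lt0r_neq0. Qed.

Let E_fine : ('E_P[fun w => expR (- (L * max_abs w))])%E = E%:E.
Proof.
by rewrite fineK// (expectation_expR_fin_num P measurable_max_abs max_abs_ge0 L_ge0).
Qed.

Lemma expectation_expR_max_abs_ge :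
  expR (- N%:R) * (normal_small_ball_const / (L / N%:R)) ^+ N <= E.
Proof.
have x2 := x_ge2; set x := L / N%:R in x2 *.
have t0 : 0 <= x^-1 by rewrite invr_ge0; lra.
have := expectation_expR_ge P measurable_max_abs L_ge0 x^-1.
rewrite E_fine prob_max_abs_le// -EFinM lee_fin => /(le_trans _); apply.
rewrite {1}L_eq -mulrA divff ?mulr1; last by rewrite gt_eqF// (lt_le_trans _ x_ge2).
rewrite ler_wpM2l ?expR_ge0// lerXn2r ?nnegrE ?normal_ball_prob_ge0//.
  by rewrite mulr_ge0// ltW// normal_small_ball_const_gt0.
by rewrite normal_ball_prob_ge// t0 lef_pV2 ?posrE; lra.
Qed.

Lemma expectation_expR_max_abs_le :
  E <= 2 * expR (- (N%:R * (1 + ln (L / N%:R)) / 2)).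
Proof.
have x2 := x_ge2; set x := L / N%:R in x2 *; set a := ln x.
set s := expR (- ((1 + a) / 2)).
have := expectation_expR_le P measurable_max_abs max_abs_ge0 L_ge0 s.
rewrite E_fine prob_max_abs_le ?expR_ge0// -EFinD lee_fin => /le_trans; apply.
have sN : s ^+ N = expR (- (N%:R * (1 + a) / 2)).
  by rewrite -expRM_natl; congr expR; lra.
have Ls : N%:R * (1 + a) / 2 <= L * s.
  have -> : L * s = N%:R * expR (a - (1 + a) / 2).
    rewrite expRD lnK ?posrE; last lra.
    by rewrite {1}L_eq -mulrA.
  rewrite -mulrA ler_pM2l//; have := expR_ge1Dx (a - (1 + a) / 2); lra.
have qs : normal_ball_prob s ^+ N <= s ^+ N.
  by rewrite lerXn2r ?nnegrE ?normal_ball_prob_ge0 ?normal_ball_prob_le ?expR_ge0.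
have : expR (- (L * s)) <= expR (- (N%:R * (1 + a) / 2)) by rewrite ler_expR; lra.
lra.
Qed.

End max_abs_gaussian.

Section log_bounds.
Variable R : realType.

Lemma ln2_ge_half : 2^-1 <= ln (2 : R).
Proof.
have := @le_ln1Dx R (- 2^-1) ltac:(lra).
by rewrite [1 - _](_ : _ = 2^-1 :> R) ?lnV ?posrE; lra.
Qed.

Lemma ln2_le : ln (2 : R) <= 5 / 6.
Proof.
have -> : (2 : R) = (1 + 3^-1) * (1 + 2^-1) by field.
rewrite lnM ?posrE; [|lra|lra].
have := @le_ln1Dx R 3^-1 ltac:(lra); have := @le_ln1Dx R 2^-1 ltac:(lra).
lra.
Qed.

Lemma neg_ln_ge_of_le_expR (N : nat) (x e : R) : (1 <= N)%N -> 2 <= x -> 0 < e ->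
  e <= 2 * expR (- (N%:R * (1 + ln x) / 2)) -> 20^-1 * N%:R * ln x <= - ln e.
Proof.
move=> N1 x2 e0 he; have n1 : 1 <= N%:R :> R by rewrite ler1n.
move: he; rewrite -ler_ln ?posrE ?mulr_gt0 ?expR_gt0//.
rewrite lnM ?posrE ?expR_gt0// expRK.
have l2 := ln2_ge_half; have l2u := ln2_le.
have ax : ln 2 <= ln x by rewrite ler_ln ?posrE; lra.
have : 0 <= (N%:R - 1) * ln x by rewrite mulr_ge0 //; lra.
nra.
Qed.

Lemma neg_ln_le_of_ge_expR (N : nat) (k x e : R) : 0 < k -> 2 <= x ->
  expR (- N%:R) * (k / x) ^+ N <= e -> - ln e <= (3 + 2 * `|ln k|) * N%:R * ln x.
Proof.
move=> k0 x2 he; have x0 : 0 < x by lra.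
have e0 : 0 < e.
  by apply: lt_le_trans he; rewrite mulr_gt0 ?expR_gt0 ?exprn_gt0 ?divr_gt0.
move: he; rewrite -ler_ln ?posrE ?mulr_gt0 ?expR_gt0 ?exprn_gt0 ?divr_gt0//.
rewrite lnM ?posrE ?expR_gt0 ?exprn_gt0 ?divr_gt0// expRK lnXn ?divr_gt0//.
rewrite lnM ?posrE ?invr_gt0// lnV ?posrE// -[(_ - _) *+ N]mulr_natr.
have ax : 2^-1 <= ln x by apply: le_trans ln2_ge_half _; rewrite ler_ln ?posrE; lra.
have lnk : N%:R * - ln k <= N%:R * `|ln k|.
  by rewrite ler_wpM2l// -normrN ler_norm.
have : 0 <= N%:R * (1 + `|ln k|) * (2 * ln x - 1) by rewrite !mulr_ge0//; lra.
nra.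
Qed.

End log_bounds.

Theorem lemma8 (R : realType) :
  exists c3 c4 : R, 0 < c3 /\ 0 < c4 /\
  forall (d : measure_display) (T : measurableType d) (P : probability T R)
         (xi : nat -> {RV P >-> R}),
    mutually_independent P (fun i => (xi i : T -> R)) ->
    (forall i, std_gaussian (xi i)) ->
    forall (N : nat) (L : R), (1 <= N)%N -> 2 * N%:R <= L ->
      let E := fine ('E_P[fun w => expR (- (L * \big[Num.max/0]_(i < N) `|xi i w|))%R])%E in
      c3 * N%:R * ln (L / N%:R) <= - ln E /\
      - ln E <= c4 * N%:R * ln (L / N%:R).
Proof.
exists 20^-1, (3 + 2 * `|ln (@normal_small_ball_const R)|).
do 2 (split; first by have := normr_ge0 (ln (@normal_small_ball_const R)); lra).
move=> d T P xi indep gauss N L N1 LN E.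
have x2 : 2 <= L / N%:R by rewrite ler_pdivlMr ?ltr0n//; lra.
have E_ge := expectation_expR_max_abs_ge indep gauss N1 LN.
have E_le := expectation_expR_max_abs_le indep gauss N1 LN.
have E0 : 0 < E.
  apply: lt_le_trans E_ge.
  by rewrite mulr_gt0 ?expR_gt0// exprn_gt0// divr_gt0 ?normal_small_ball_const_gt0//; lra.
split; first exact: neg_ln_ge_of_le_expR.
exact: neg_ln_le_of_ge_expR normal_small_ball_const_gt0 x2 E_ge.
Qed.
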